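(* For a positive integer $M$, let $\mathcal O(M)$ be the set of distinct orbits $o(\mathbf{x})$ with $\mathbf{x}\in[0,M]^2\cap\mathbb{Z}^2$. Then: - $\frac1{\#\mathcal O(M)}\sum_{o\in\mathcal O(M)}\operatorname{diam}_E(o)=\frac{7\sqrt2}{6}M+O(1)$; - the average over $\mathcal O(M)$ of the side length of the smallest axis-parallel square containing the orbit is $\frac76M+O(1)$; - the average over $\mathcal O(M)$ of $\operatorname{length}(o)$ is $\frac{14}{3}M+O(1)$.
   Context: Define $\mathcal K_1(x_1,x_2)=(-x_1+x_2,x_2)$ and $\mathcal K_2(x_1,x_2)=(x_1,x_1-x_2)$ on $\mathbb{Z}^2$. The orbit $o(\mathbf{x})$ is the set of points obtained from $\mathbf{x}$ by repeated application of $\mathcal K_1,\mathcal K_2$: $(x_1,x_2)$, $(-x_1+x_2,x_2)$, $(-x_1+x_2,-x_1)$, $(-x_2,-x_1)$, $(-x_2,x_1-x_2)$, $(x_1,x_1-x_2)$. Definitions of the averaged quantities: - $\operatorname{diam}_E(o)$ is the maximum Euclidean distance between two points of $o$. - $\operatorname{length}(o(\mathbf{x}))=2\big(|2x_1-x_2|+|x_1+x_2|+|2x_2-x_1|\big)$ is the Euclidean length of the closed path through the six points in the listed order. - The smallest axis-parallel rectangle containing $o(\mathbf{x})$ is a square of side $\max\{|x_1+x_2|,|x_1-2x_2|,|x_2-2x_1|\}$. *)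

From HB Require Import structures.
From mathcomp Require Import all_boot all_order all_algebra finmap.
From mathcomp Require Import reals.
Set Implicit Arguments. Unset Strict Implicit. Unset Printing Implicit Defensive.
Import Order.TTheory GRing.Theory Num.Theory.
Local Open Scope fset_scope.
Local Open Scope ring_scope.

Definition pt := (int * int)%type.

Definition K1 (x : pt) : pt := (- x.1 + x.2, x.2).
Definition K2 (x : pt) : pt := (x.1, x.1 - x.2).

Definition orbit_list (x : pt) : seq pt :=
  [:: x; K1 x; K2 (K1 x); K1 (K2 (K1 x)); K2 (K1 (K2 (K1 x)));
      K1 (K2 (K1 (K2 (K1 x))))].
Definition orbit (x : pt) : {fset pt} := [fset y | y in orbit_list x].

Definition orbits (M : nat) : {fset {fset pt}} :=
  [fset o | o in [seq orbit (i%:Z, j%:Z) | i <- iota 0 M.+1, j <- iota 0 M.+1]].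

Definition distE (R : realType) (p q : pt) : R :=
  Num.sqrt (((p.1 - q.1)%:~R) ^+ 2 + ((p.2 - q.2)%:~R) ^+ 2).

Definition diamE (R : realType) (o : {fset pt}) : R :=
  \big[Num.max/0]_(p <- o) \big[Num.max/0]_(q <- o) distE R p q.

Definition rep (o : {fset pt}) : pt := head (0, 0) (o : seq pt).

(* side of the smallest axis-parallel square containing o:
   max(width, height) of the bounding box *)
Definition sq_side (R : realType) (o : {fset pt}) : R :=
  let r := rep o in
  let maxx := \big[Num.max/r.1]_(p <- o) p.1 in
  let minx := \big[Num.min/r.1]_(p <- o) p.1 in
  let maxy := \big[Num.max/r.2]_(p <- o) p.2 in
  let miny := \big[Num.min/r.2]_(p <- o) p.2 in
  (Num.max (maxx - minx) (maxy - miny))%:~R.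

(* length(o(x)) = 2(|2x1-x2| + |x1+x2| + |2x2-x1|)  (independent of the
   representative x of the orbit) *)
Definition length_formula (x : pt) : int :=
  2 * (`|2 * x.1 - x.2| + `|x.1 + x.2| + `|2 * x.2 - x.1|).
Definition orbit_length (R : realType) (o : {fset pt}) : R :=
  (length_formula (rep o))%:~R.

Definition avgO (R : realType) (f : {fset pt} -> R) (M : nat) : R :=
  (\sum_(o <- orbits M) f o) / (#|` orbits M|)%:R.

(* K1 and K2 are involutions with (K1 K2)^3 = 1, so an orbit is the hexagon of images of x
   under a dihedral group of order 6, on which K1 and K2 act as reflections.  Each orbit of a
   point of [0,M]^2 contains exactly one reduced point (a, b) of [0,M]^2, i.e. one with
   0 <= a, 2a <= b or 0 < b, 2b <= a.  The orbit of a reduced point lies in an axis-parallel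
   square of side s = max(2b - a, 2a - b) and contains two opposite corners of it, so its
   square side, diameter and length are s, sqrt 2 s and 4 s.  Adding the reduced points
   shell by shell (by largest coordinate) shows that there are (M+1)^2/2 + O(1) of them and
   that their values of s add up to 7 M^3 / 12 + O(M^2), so the averages are multiples of
   7 M / 6 + O(1). *)

From Pilot Require Import Defs.
From HB Require Import structures.
From mathcomp Require Import all_boot all_order all_algebra finmap.
From mathcomp Require Import reals.
From mathcomp Require Import zify ring lra.
Import Order.TTheory GRing.Theory Num.Theory.
Set Implicit Arguments. Unset Strict Implicit. Unset Printing Implicit Defensive.
Local Open Scope ring_scope.

(* [fingraph] also defines an [orbit]. *)
Local Notation orbit := Defs.orbit.

Lemma orbit_listE (a b : int) : orbit_list (a, b) =
  [:: (a, b); (b - a, b); (b - a, - a); (- b, - a); (- b, a - b); (a, a - b)].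
Proof. by rewrite /orbit_list /K1 /K2 /=; congr [:: _; _; _; _; _; _]; congr pair; ring. Qed.

Lemma orbit_listK1 x : orbit_list (K1 x) = rot 4 (rev (orbit_list x)).
Proof.
by case: x => a b; rewrite /K1 /= !orbit_listE /=; congr [:: _; _; _; _; _; _];
  congr pair; ring.
Qed.

Lemma orbit_listK2 x : orbit_list (K2 x) = rev (orbit_list x).
Proof.
by case: x => a b; rewrite /K2 /= !orbit_listE /=; congr [:: _; _; _; _; _; _];
  congr pair; ring.
Qed.

Lemma mem_orbit x y : (y \in orbit x) = (y \in orbit_list x).
Proof. by apply/imfsetP/idP => [[z /= zx ->] | yx] //; exists y. Qed.

Lemma eq_orbit x y : orbit_list x =i orbit_list y -> orbit x = orbit y.
Proof. by move=> exy; apply/fsetP => z; rewrite !mem_orbit exy. Qed.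

Lemma orbitK1 x : orbit (K1 x) = orbit x.
Proof. by apply: eq_orbit => z; rewrite orbit_listK1 mem_rot mem_rev. Qed.

Lemma orbitK2 x : orbit (K2 x) = orbit x.
Proof. by apply: eq_orbit => z; rewrite orbit_listK2 mem_rev. Qed.

Lemma orbit_all (P : pred pt) x : all P (orbit_list x) -> {in orbit x, forall y, P y}.
Proof. by move=> /allP Px y; rewrite mem_orbit => /Px. Qed.

Lemma length_formula_orbit x y : y \in orbit x -> length_formula y = length_formula x.
Proof.
case: x => a b yx; apply/eqP; move: y yx; apply: orbit_all.
by rewrite orbit_listE /= /length_formula /=; lia.
Qed.

Lemma rep_mem (o : {fset pt}) x : x \in o -> rep o \in o.
Proof.
rewrite -[x \in o]/(x \in enum_fset o) -[rep o \in o]/(rep o \in enum_fset o) /rep.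
by case: (enum_fset o) => //= y s _; rewrite mem_head.
Qed.

Lemma bigmax_attained (T : eqType) (R : realDomainType) (s : seq T) (x0 : R) (f : T -> R) y :
  y \in s -> x0 <= f y -> {in s, forall x, f x <= f y} ->
  \big[Num.max/x0]_(x <- s) f x = f y.
Proof.
move=> ys x0y fy; apply/le_anti; rewrite le_bigmax_seq // andbT big_seq.
exact: bigmax_le.
Qed.

Lemma bigmin_attained (T : eqType) (R : realDomainType) (s : seq T) (x0 : R) (f : T -> R) y :
  y \in s -> f y <= x0 -> {in s, forall x, f y <= f x} ->
  \big[Num.min/x0]_(x <- s) f x = f y.
Proof.
move=> ys x0y fy; apply/le_anti; rewrite ge_bigmin_seq // big_seq.
exact: le_bigmin.
Qed.

Definition in_square (c : pt) (m : int) (p : pt) : bool :=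
  (c.1 <= p.1 <= c.1 + m) && (c.2 <= p.2 <= c.2 + m).

Section Square.
Variables (o : {fset pt}) (c : pt) (m : int).
Hypotheses (o_sq : {in o, forall p, in_square c m p})
  (c_in : c \in o) (c'_in : (c.1 + m, c.2 + m) \in o).

Lemma sq_side_square (R : realType) : sq_side R o = m%:~R.
Proof.
rewrite /sq_side; congr intmul.
have /o_sq/andP[/andP[rx1 rx2] /andP[ry1 ry2]] := rep_mem c_in.
have -> : \big[Num.max/(rep o).1]_(p <- o) p.1 = c.1 + m.
  by apply: (bigmax_attained c'_in rx2) => p /o_sq/andP[/andP[]].
have -> : \big[Num.min/(rep o).1]_(p <- o) p.1 = c.1.
  by apply: (bigmin_attained c_in rx1) => p /o_sq/andP[/andP[]].
have -> : \big[Num.max/(rep o).2]_(p <- o) p.2 = c.2 + m.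
  by apply: (bigmax_attained c'_in ry2) => p /o_sq/andP[_ /andP[]].
have -> : \big[Num.min/(rep o).2]_(p <- o) p.2 = c.2.
  by apply: (bigmin_attained c_in ry1) => p /o_sq/andP[_ /andP[]].
by rewrite [c.1 + m]addrC [c.2 + m]addrC !addrK maxxx.
Qed.

Lemma diamE_square (R : realType) : diamE R o = Num.sqrt 2 * m%:~R.
Proof.
have /o_sq/andP[/andP[_ c_le] _] := c_in.
have m_ge0 : 0 <= m by rewrite -(lerD2l c.1) addr0.
have distE_int p q : distE R p q = Num.sqrt ((p.1 - q.1) ^+ 2 + (p.2 - q.2) ^+ 2)%:~R.
  by rewrite /distE !(rmorphD, rmorphN, rmorphXn).
have -> : Num.sqrt 2 * m%:~R = Num.sqrt (2 * m ^+ 2)%:~R :> R.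
  by rewrite rmorphM rmorphXn sqrtrM // sqrtr_sqr ger0_norm ?ler0z.
apply/le_anti/andP; split; rewrite /diamE.
  rewrite big_seq; apply: bigmax_le => [|p /o_sq/andP[/andP[? ?] /andP[? ?]]].
    exact: sqrtr_ge0.
  rewrite big_seq; apply: bigmax_le => [|q /o_sq/andP[/andP[? ?] /andP[? ?]]].
    exact: sqrtr_ge0.
  by rewrite distE_int ler_sqrt ?ler_int ?ler0z; rewrite !expr2; nia.
apply: le_trans (le_bigmax_seq _ _ xpredT _ c_in isT).
apply: le_trans (le_bigmax_seq _ _ xpredT _ c'_in isT).
by rewrite distE_int /= !opprD !addrA !subrr !add0r !sqrrN -mulr2n mulr_natl.
Qed.

End Square.

Definition reduced (x : pt) : bool :=
  ((0 <= x.1) && (2 * x.1 <= x.2)) || ((0 < x.2) && (2 * x.2 <= x.1)).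

Definition side (x : pt) : int :=
  if 2 * x.1 <= x.2 then 2 * x.2 - x.1 else 2 * x.1 - x.2.

Lemma reduced_square x : reduced x -> exists c,
  [/\ {in orbit x, forall p, in_square c (side x) p}, c \in orbit x
    & (c.1 + side x, c.2 + side x) \in orbit x].
Proof.
case: x => a b; rewrite /reduced /side /= => /orP[/andP[a_ge0 le_2a_b] | /andP[b_gt0 le_2b_a]].
- rewrite le_2a_b; exists (- b, a - b); split.
  + by apply: orbit_all; rewrite orbit_listE /= /in_square /=; lia.
  + by rewrite mem_orbit orbit_listE !inE eqxx !orbT.
  + have -> : (- b + (2 * b - a), a - b + (2 * b - a)) = (b - a, b) by congr pair; ring.
    by rewrite mem_orbit orbit_listE !inE eqxx !orbT.
- have -> : (2 * a <= b) = false by lia.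
  exists (b - a, - a); split.
  + by apply: orbit_all; rewrite orbit_listE /= /in_square /=; lia.
  + by rewrite mem_orbit orbit_listE !inE eqxx !orbT.
  + have -> : (b - a + (2 * a - b), - a + (2 * a - b)) = (a, a - b) by congr pair; ring.
    by rewrite mem_orbit orbit_listE !inE eqxx !orbT.
Qed.

Lemma length_formula_reduced x : reduced x -> length_formula x = 4 * side x.
Proof. by case: x => a b; rewrite /reduced /side /length_formula /=; case: ifP; lia. Qed.

Lemma reduced_measures (R : realType) x : reduced x ->
  [/\ sq_side R (orbit x) = (side x)%:~R,
      diamE R (orbit x) = Num.sqrt 2 * (side x)%:~R
    & orbit_length R (orbit x) = 4 * (side x)%:~R].
Proof.
move=> x_red; have [c [x_sq c_in c'_in]] := reduced_square x_red.
split; [exact: (sq_side_square x_sq c_in c'_in) | exact: (diamE_square x_sq c_in c'_in) |].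
by rewrite /orbit_length (length_formula_orbit (rep_mem c_in)) length_formula_reduced // rmorphM.
Qed.

Lemma reduced_orbit_inj x y : reduced x -> reduced y -> orbit x = orbit y -> x = y.
Proof.
case: x y => a b [c d] + + eq_orbit.
have : (a, b) \in orbit (c, d) by rewrite -eq_orbit mem_orbit orbit_listE mem_head.
rewrite /reduced mem_orbit orbit_listE !inE !xpair_eqE /= => ? ? ?.
by apply/eqP; rewrite xpair_eqE; lia.
Qed.

Definition grid (M : nat) : seq pt :=
  [seq (i%:Z, j%:Z) | i <- iota 0 M.+1, j <- iota 0 M.+1].

Definition reduced_grid (M : nat) : seq pt := [seq x <- grid M | reduced x].

Lemma mem_grid M x : (x \in grid M) = (0 <= x.1 <= M%:Z) && (0 <= x.2 <= M%:Z).
Proof.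
apply/allpairsP/idP => [[[i j] [+ + ->]] | ]; first by rewrite !mem_iota /=; lia.
case: x => a b bounds; exists (`|a|%N, `|b|%N); rewrite !mem_iota.
by move: bounds => /= bounds; split; [lia | lia | congr pair; lia].
Qed.

Lemma mem_reduced_grid M x :
  (x \in reduced_grid M) = [&& reduced x, 0 <= x.1 <= M%:Z & 0 <= x.2 <= M%:Z].
Proof. by rewrite mem_filter mem_grid. Qed.

Lemma reduced_grid_uniq M : uniq (reduced_grid M).
Proof.
apply/filter_uniq/allpairs_uniq; rewrite ?iota_uniq //.
by move=> [i j] [k l] _ _ /= [-> ->].
Qed.

Lemma exists_reduced M x : x \in grid M -> exists2 r, r \in reduced_grid M & orbit r = orbit x.
Proof.
case: x => a b; rewrite mem_grid /= => bounds.
have [le_2a_b | lt_b_2a] := leP (2 * a) b.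
  by exists (a, b) => //; rewrite mem_reduced_grid /reduced /=; lia.
have [le_a_b | lt_b_a] := leP a b.
  by exists (K1 (a, b)); rewrite ?orbitK1 // mem_reduced_grid /reduced /K1 /=; lia.
have [b0 | b_gt0] := eqVneq b 0.
  exists (K1 (K2 (a, b))); rewrite ?orbitK1 ?orbitK2 //.
  by rewrite mem_reduced_grid /reduced /K1 /K2 /=; lia.
have [le_2b_a | lt_a_2b] := leP (2 * b) a.
  by exists (a, b) => //; rewrite mem_reduced_grid /reduced /=; lia.
by exists (K2 (a, b)); rewrite ?orbitK2 // mem_reduced_grid /reduced /K2 /=; lia.
Qed.

Lemma orbits_perm M : perm_eq (orbits M) [seq orbit r | r <- reduced_grid M].
Proof.
have -> : orbits M = [fset orbit r | r in reduced_grid M]%fset.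
  have -> : orbits M = [fset o | o in [seq orbit x | x <- grid M]]%fset.
    by rewrite /orbits /grid map_allpairs.
  apply/fsetP => o; apply/imfsetP/imfsetP => -[o' + ->].
    by move=> /mapP[x /exists_reduced[r r_in <-] ->]; exists r.
  rewrite mem_filter => /andP[_ r_in]; exists (orbit o') => //.
  exact: map_f.
apply: perm_trans (enum_imfset _ _) _.
  by move=> x y; rewrite !mem_filter => /andP[? _] /andP[? _]; apply: reduced_orbit_inj.
apply: perm_map; apply: uniq_perm; rewrite ?enum_finmem_uniq ?reduced_grid_uniq //.
exact: enum_finmemE.
Qed.

Lemma avgO_reduced (R : realType) (f : {fset pt} -> R) M :
  avgO f M = (\sum_(r <- reduced_grid M) f (orbit r)) / (size (reduced_grid M))%:R.
Proof.
have orbitsP := orbits_perm M.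
by rewrite /avgO (perm_big _ orbitsP) big_map (perm_size orbitsP) size_map.
Qed.

Lemma sum_reduced_grid (V : nmodType) (F : pt -> V) M :
  \sum_(x <- reduced_grid M) F x =
  \sum_(i < M.+1) \sum_(j < M.+1) (if reduced (i%:Z, j%:Z) then F (i%:Z, j%:Z) else 0).
Proof.
rewrite big_filter big_mkcond big_allpairs_dep -[iota 0 M.+1]/(index_iota 0 M.+1).
by rewrite big_mkord; apply: eq_bigr => i _; rewrite big_mkord.
Qed.

(* The reduced points of [0,n]^2 outside [0,n-1]^2: (i, n) with 2i <= n and (n, j) with
   0 < 2j <= n. *)
Definition shell (V : nmodType) (F : pt -> V) (n : nat) : V :=
  \sum_(i < n./2.+1) F (i%:Z, n%:Z) + \sum_(j < n./2.+1 | (0 < j)%N) F (n%:Z, j%:Z).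

Lemma sum_reduced_gridS (V : nmodType) (F : pt -> V) M :
  \sum_(x <- reduced_grid M.+1) F x = \sum_(x <- reduced_grid M) F x + shell F M.+1.
Proof.
rewrite !sum_reduced_grid big_ord_recr /=.
under eq_bigr do rewrite big_ord_recr /=.
rewrite big_split /= -addrA; congr (_ + _).
rewrite [X in _ + X]big_ord_recr /= (_ : reduced _ = false) ?addr0; last first.
  by rewrite /reduced /=; lia.
have le_half : (M.+1./2.+1 <= M.+1)%N by rewrite -divn2; lia.
rewrite /shell (big_ord_widen _ (fun i => F (i%:Z, M.+1%:Z)) le_half).
rewrite (big_ord_widen_cond _ (fun j => 0 < j)%N (fun j => F (M.+1%:Z, j%:Z)) le_half).
by congr (_ + _); rewrite [RHS]big_mkcond; apply: eq_bigr => i _; have := ltn_ord i;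
  rewrite /reduced /= uphalfE -divn2; case: ifP; case: ifP => // *; exfalso; lia.
Qed.

Lemma sum_affine (c d : int) k :
  2 * \sum_(i < k.+1) (c - d * i%:Z) = 2 * c * k.+1%:Z - d * k%:Z * k.+1%:Z.
Proof.
elim: k => [|k IH]; first by rewrite big_ord_recr big_ord0 /=; ring.
by rewrite big_ord_recr /= mulrDr IH !intS; ring.
Qed.

Lemma shell_affine (F : pt -> int) (c d : int) n :
  (forall i : nat, (2 * i <= n)%N ->
     F (i%:Z, n%:Z) = c - d * i%:Z /\ F (n%:Z, i%:Z) = c - d * i%:Z) ->
  shell F n = c * (2 * n./2 + 1)%:Z - d * (n./2 * n./2.+1)%:Z.
Proof.
move=> F_affine.
have half_ok (i : nat) : (i < n./2.+1)%N -> (2 * i <= n)%N by rewrite -divn2; lia.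
rewrite /shell.
under eq_bigr do rewrite (F_affine _ (half_ok _ (ltn_ord _))).1.
under [X in _ + X]eq_bigr do rewrite (F_affine _ (half_ok _ (ltn_ord _))).2.
rewrite [X in _ + X](eq_bigl (fun j : 'I_n./2.+1 => j != ord0)) => [|j]; last by rewrite lt0n.
have := sum_affine c d n./2; rewrite (bigD1 ord0) //= mulr0 subr0.
by set S := \sum_(_ < _ | _) _; rewrite !PoszD !PoszM intS; lia.
Qed.

Lemma shell_side n :
  shell side n = 2 * n%:Z * (2 * n./2 + 1)%:Z - (n./2 * n./2.+1)%:Z.
Proof.
by rewrite (@shell_affine _ (2 * n%:Z) 1) ?mul1r // => i le_2i_n; rewrite /side /=; split;
  case: ifP; lia.
Qed.

Lemma size_sum1 (T : Type) (s : seq T) : (size s)%:Z = \sum_(x <- s) 1.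
Proof. by elim: s => [|x s IH]; rewrite ?big_nil ?big_cons //= intS IH. Qed.

Lemma size_reduced_grid M :
  2 * (size (reduced_grid M))%:Z = (M%:Z + 1) ^+ 2 + (odd M.+1)%:Z.
Proof.
elim: M => [|M IH]; first by [].
rewrite size_sum1 sum_reduced_gridS -size_sum1 (@shell_affine _ 1 0) //.
rewrite mulrDr IH -modn2 -divn2; nia.
Qed.

(* 12 * shell side n.+1 - 7((n+1)^3 - n^3) is 78k - 7 if n+1 = 2k and 42k + 17 if n+1 = 2k+1. *)
Lemma shell_side_bounds n :
  7 * (3 * n%:Z ^+ 2 + 3 * n%:Z + 1) <= 12 * shell side n.+1
    <= 7 * (3 * n%:Z ^+ 2 + 3 * n%:Z + 1) + 39 * (n%:Z + 1).
Proof.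
have [k [n_eq | n_eq]] : exists k, n.+1 = k.*2 \/ n.+1 = k.*2.+1.
  by exists n.+1./2; rewrite -divn2 -!muln2; lia.
- by rewrite shell_side n_eq half_double; nia.
- by rewrite shell_side n_eq /= uphalf_double; nia.
Qed.

Lemma sum_side_bounds M :
  0 <= 12 * \sum_(x <- reduced_grid M) side x - 7 * M%:Z ^+ 3 <= 20 * (M%:Z + 1) ^+ 2.
Proof.
elim: M => [|M IH]; first by rewrite (_ : reduced_grid 0 = [:: (0, 0)]) // big_seq1.
rewrite sum_reduced_gridS mulrDr; have := shell_side_bounds M.
set S := \sum_(_ <- _) _ in IH *; set D := shell side M.+1; rewrite intS; nia.
Qed.

Lemma sum_side_size M :
  `|12 * \sum_(x <- reduced_grid M) side x - 14 * M%:Z * (size (reduced_grid M))%:Z|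
    <= 40 * (size (reduced_grid M))%:Z.
Proof.
have := size_reduced_grid M; have := sum_side_bounds M.
set S := \sum_(_ <- _) _; set N := (size _)%:Z.
by case: (odd _) => /= bounds N_eq; rewrite ler_norml; apply/andP; split; nia.
Qed.

Lemma side_average (R : realType) M :
  `|(\sum_(x <- reduced_grid M) side x)%:~R / (size (reduced_grid M))%:R - 7 / 6 * M%:R|
    <= 4 :> R.
Proof.
have := sum_side_size M; have := size_reduced_grid M.
set S := \sum_(_ <- _) _; set N := size _ => N_eq.
have N_gt0 : 0 < N%:R :> R by rewrite ltr0n; nia.
rewrite -(ler_int R) intr_norm !(rmorphB, rmorphM) /= => bound.
have {}bound : `|12 * S%:~R - 14 * M%:R * N%:R| <= 40 * N%:R :> R := bound.
have -> : S%:~R / N%:R - 7 / 6 * M%:R = (12 * S%:~R - 14 * M%:R * N%:R) / (12 * N%:R) :> R.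
  by field; rewrite gt_eqF.
rewrite normrM normfV (@gtr0_norm _ (12 * N%:R)) ?mulr_gt0 // ler_pdivrMr ?mulr_gt0 //; lra.
Qed.

Lemma avgO_side_multiple (R : realType) (f : {fset pt} -> R) (c : R) M :
  (forall x, reduced x -> f (orbit x) = c * (side x)%:~R) ->
  `|avgO f M - c * (7 / 6 * M%:R)| <= `|c| * 4.
Proof.
move=> f_side; rewrite avgO_reduced (eq_big_seq (fun x => c * (side x)%:~R)) => [|x]; last first.
  by rewrite mem_filter => /andP[/f_side].
rewrite -mulr_sumr -rmorph_sum -mulrA -mulrBr normrM ler_wpM2l //; exact: side_average.
Qed.

Theorem mainTheorem17 (R : realType) :
  (exists C : R, forall M : nat, (0 < M)%N ->
     `|avgO (@diamE R) M - 7 * Num.sqrt 2 / 6 * M%:R| <= C) /\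
  (exists C : R, forall M : nat, (0 < M)%N ->
     `|avgO (@sq_side R) M - 7 / 6 * M%:R| <= C) /\
  (exists C : R, forall M : nat, (0 < M)%N ->
     `|avgO (@orbit_length R) M - 14 / 3 * M%:R| <= C).
Proof.
split; [|split].
- exists (`|Num.sqrt 2| * 4) => M _.
  rewrite (_ : 7 * _ / 6 * _ = Num.sqrt 2 * (7 / 6 * M%:R)); last by ring.
  by apply: avgO_side_multiple => x /(reduced_measures R)[].
- exists (`|1| * 4) => M _; rewrite -[7 / 6 * _]mul1r.
  by apply: avgO_side_multiple => x /(reduced_measures R)[-> _ _]; rewrite mul1r.
- exists (`|4| * 4) => M _.
  rewrite (_ : 14 / 3 * _ = 4 * (7 / 6 * M%:R)); last by lra.
  by apply: avgO_side_multiple => x /(reduced_measures R)[].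
Qed.
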